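(* Let $\mathsf V$ be a 1ESP variety and $h$ an algebraic e-generalization problem for $\mathsf V$. Then the e-generalization type of $h$ is exactly the type of $\mathscr G(h)$.
   Context: $\mathbf F_{\mathsf V}(z)$ is the free algebra of the variety $\mathsf V$ on one generator $z$. An algebra is projective in $\mathsf V$ iff it is a retract of a free algebra; exact if isomorphic to a finitely generated subalgebra of a finitely generated free algebra of $\mathsf V$. $\mathbf S$ is strongly projective if it is projective and for every embedding $i:\mathbf S\to\mathbf P$ into a projective $\mathbf P$ there is a homomorphism $j$ with $j\circ i=\mathrm{id}_{\mathbf S}$; $\mathsf V$ is 1ESP if every 1-generated exact algebra in $\mathsf V$ is strongly projective. An algebraic e-generalization problem is a homomorphism $h:\mathbf F_{\mathsf V}(z)\to\prod_{k=1}^m\mathbf E_k$ with each $\mathbf E_k$ 1-generated exact and each $p_k\circ h$ surjective. A solution of $h$ is a homomorphism $g:\mathbf F_{\mathsf V}(z)\to\mathbf P$, $\mathbf P$ finitely generated projective, with $f\circ g=h$ for some homomorphism $f$. $g\sqsubseteq g'$ iff $f\circ g'=g$ for some homomorphism $f$. A minimal complete set in a poset is a set of pairwise incomparable elements such that every element lies above one of them; the e-generalization type of $h$ is unitary/finitary/infinitary/nullary according to whether the poset of solutions modulo $\sqsubseteq$-equivalence has a minimal complete set of cardinality 1 / finite $>1$ / infinite / none. $\mathscr G(h)=\{\ker(g):g\text{ a solution}\}$; a maximal complete set in $(\mathscr G(h),\subseteq)$ is a set of pairwise incomparable elements such that every element is contained in one of them, and the type of $\mathscr G(h)$ is unitary/finitary/infinitary/nullary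 according to whether there is one of cardinality 1 / finite $>1$ / infinite / none. *)

From mathcomp Require Import all_boot.
Set Implicit Arguments. Unset Strict Implicit. Unset Printing Implicit Defensive.

Record signature := Signature { op : Type; arity : op -> nat }.

Section UA.
Variable sg : signature.

Record algebra := Algebra {
  carrier :> Type;
  interp : forall o : op sg, ('I_(arity o) -> carrier) -> carrier }.
Arguments interp {a} o _.

Definition is_hom (A B : algebra) (f : A -> B) : Prop :=
  forall (o : op sg) (a : 'I_(arity o) -> A),
    f (interp o a) = interp o (fun i => f (a i)).

Inductive term : Type :=
  | Var (n : nat)
  | App (o : op sg) (args : 'I_(arity o) -> term).

Fixpoint eval (A : algebra) (v : nat -> A) (t : term) : A :=
  match t with
  | Var n => v n
  | App o args => interp o (fun i => eval v (args i))
  end.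

(* A variety, presented (Birkhoff) by a set of identities. *)
Record variety := Variety { identities : term -> term -> Prop }.

Definition in_V (V : variety) (A : algebra) : Prop :=
  forall t1 t2, identities V t1 t2 -> forall v : nat -> A, eval v t1 = eval v t2.

Definition closed (A : algebra) (P : A -> Prop) : Prop :=
  forall o (a : 'I_(arity o) -> A), (forall i, P (a i)) -> P (interp o a).

Definition gen_closure (A : algebra) (S : A -> Prop) (x : A) : Prop :=
  forall P : A -> Prop, (forall y, S y -> P y) -> closed P -> P x.

Definition generated_by (A : algebra) (S : A -> Prop) : Prop :=
  forall x : A, gen_closure S x.

Definition fin_gen (A : algebra) : Prop :=
  exists n (g : 'I_n -> A), generated_by (fun y => exists i, g i = y).

Definition one_gen (A : algebra) : Prop :=
  exists a : A, generated_by (fun y => y = a).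

Lemma gen_closure_closed (A : algebra) (S : A -> Prop) : closed (gen_closure S).
Proof. move=> o a Ha P HS HP; apply: (HP o a) => i; exact: (Ha i P HS HP). Qed.

Definition gen_sub (F : algebra) (n : nat) (g : 'I_n -> F) : algebra :=
  @Algebra {x : F | gen_closure (fun y => exists i, g i = y) x}
    (fun o a => exist _ (interp o (fun i => proj1_sig (a i)))
                  (@gen_closure_closed F _ o (fun i => proj1_sig (a i))
                      (fun i => proj2_sig (a i)))).

Definition is_free (V : variety) (F : algebra) (X : Type) (ins : X -> F) : Prop :=
  in_V V F /\
  forall A : algebra, in_V V A -> forall f : X -> A,
    exists g : F -> A, [/\ is_hom g, (forall x, g (ins x) = f x) &
      forall g' : F -> A, is_hom g' -> (forall x, g' (ins x) = f x) ->
        forall y, g' y = g y].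

Definition fg_free (V : variety) (F : algebra) : Prop :=
  exists n (ins : 'I_n -> F), is_free V ins.

Definition projective (V : variety) (P : algebra) : Prop :=
  exists (X : Type) (F : algebra) (ins : X -> F) (r : F -> P) (s : P -> F),
    [/\ is_free V ins, is_hom r, is_hom s & forall x, r (s x) = x].

Definition exact (V : variety) (E : algebra) : Prop :=
  exists (F : algebra) (n : nat) (g : 'I_n -> F) (phi : E -> gen_sub g),
    [/\ fg_free V F, is_hom phi & bijective phi].

Definition strongly_projective (V : variety) (S : algebra) : Prop :=
  projective V S /\
  forall (P : algebra) (i : S -> P), projective V P -> is_hom i -> injective i ->
    exists j : P -> S, is_hom j /\ forall x, j (i x) = x.

Definition oneESP (V : variety) : Prop :=
  forall E : algebra, in_V V E -> one_gen E -> exact V E -> strongly_projective V E.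

Definition prod_alg (m : nat) (E : 'I_m -> algebra) : algebra :=
  @Algebra (forall k : 'I_m, E k) (fun o a k => interp o (fun i => a i k)).

End UA.

Section Egen.
Variables (sg : signature) (V : variety sg) (F : algebra sg) (z : F)
          (m : nat) (E : 'I_m -> algebra sg) (h : F -> prod_alg E).

(* F is F_V(z) (free on the one generator z), h is an algebraic
   e-generalization problem *)
Definition egen_problem : Prop :=
  [/\ is_free V (fun _ : unit => z), is_hom h,
      (forall k, one_gen (E k) /\ exact V (E k)) &
      (forall k (y : E k), exists x, h x k = y)].

Record solution := Solution {
  sol_P : algebra sg;
  sol_g : F -> sol_P;
  sol_hom : is_hom sol_g;
  sol_proj : projective V sol_P;
  sol_fg : fin_gen sol_P;
  sol_fact : exists f : sol_P -> prod_alg E, is_hom f /\ forall x, f (sol_g x) = h x }.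

Definition sol_le (s1 s2 : solution) : Prop :=
  exists f : sol_P s2 -> sol_P s1, is_hom f /\ forall x, f (sol_g s2 x) = sol_g s1 x.

Definition G_h (R : F -> F -> Prop) : Prop :=
  exists s : solution, forall x y, R x y <-> sol_g s x = sol_g s y.

End Egen.

Inductive gen_type := Unitary | Finitary | Infinitary | Nullary.

Section Types.
(* a preorder [le] on the elements of S satisfying D; we work in the poset
   D / (le-equivalence).  A set of classes is represented by a predicate M
   that is a union of equivalence classes. *)
Variables (S : Type) (le : S -> S -> Prop) (D : S -> Prop).

Definition pequiv (x y : S) : Prop := le x y /\ le y x.

Definition min_complete (M : S -> Prop) : Prop :=
  [/\ (forall x, M x -> D x),
      (forall x y, M x -> D y -> pequiv x y -> M y),
      (forall x y, M x -> M y -> le x y -> pequiv x y) &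
      (forall x, D x -> exists2 m, M m & le m x)].

Definition nclasses (M : S -> Prop) (n : nat) : Prop :=
  exists r : 'I_n -> S,
    [/\ (forall i, M (r i)), (forall i j, pequiv (r i) (r j) -> i = j) &
        (forall x, M x -> exists i, pequiv x (r i))].

Definition has_type (t : gen_type) : Prop :=
  match t with
  | Unitary => exists M, min_complete M /\ nclasses M 1
  | Finitary => exists M, min_complete M /\ exists n, (1 < n)%N /\ nclasses M n
  | Infinitary => exists M, min_complete M /\ forall n, ~ nclasses M n
  | Nullary => ~ exists M, min_complete M
  end.
End Types.

Definition egen_type_of sg V (F : algebra sg) m (E : 'I_m -> algebra sg)
  (h : F -> prod_alg E) (t : gen_type) : Prop :=
  has_type (@sol_le sg V F m E h) (fun _ => True) t.

(* type of (G(h), ⊆) via MAXIMAL complete sets: these are the minimal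
   complete sets for the reversed inclusion *)
Definition G_type_of sg V (F : algebra sg) m (E : 'I_m -> algebra sg)
  (h : F -> prod_alg E) (t : gen_type) : Prop :=
  has_type (fun R1 R2 : F -> F -> Prop => forall x y, R2 x y -> R1 x y)
           (@G_h sg V F m E h) t.

From Pilot Require Import Defs.
From mathcomp Require Import all_boot.
From Stdlib Require Import Classical ClassicalEpsilon FunctionalExtensionality.
Set Implicit Arguments. Unset Strict Implicit.

(** The heart of the matter: for solutions [g1] and [g2], [ker g2 ⊆ ker g1]
    already implies [g1 ⊑ g2].  Write the projective target of [g2] as a
    retract [s] of a free algebra [F_X].  The image [S] of [s ∘ g2] is
    generated by one element, which lies in a finitely generated free
    subalgebra of [F_X]; so [S] is 1-generated and exact, hence strongly
    projective by 1ESP, and therefore a retract [j] of [F_X].  The map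
    [e : F_V(z) ->> S] has kernel [ker g2 ⊆ ker g1], so [g1 = f0 ∘ e], whence
    [g1 = f0 ∘ j ∘ s ∘ g2].  Consequently [g |-> ker g] is an order equivalence
    between the solutions modulo ⊑-equivalence and [(G(h), ⊇)], and such an
    equivalence preserves the type. *)

Section Subalgebras.
Variable sg : signature.
Implicit Types (V : variety sg) (A B C : algebra sg).

Lemma proj1_sig_inj (T : Type) (P : T -> Prop) : injective (@proj1_sig T P).
Proof. by case=> x p [y q] /= exy; subst y; rewrite (proof_irrelevance _ p q). Qed.

Lemma gen_closure_base A (S : A -> Prop) y : S y -> gen_closure S y.
Proof. by move=> Sy P SP _; apply: SP. Qed.

Lemma gen_closure_mono A (S1 S2 : A -> Prop) :
  (forall y, S1 y -> S2 y) -> forall x, gen_closure S1 x -> gen_closure S2 x.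
Proof. by move=> S12 x Sx P SP Pcl; apply: Sx => // y /S12 /SP. Qed.

Lemma hom_eq_gen A B (S : A -> Prop) (f g : A -> B) :
  generated_by S -> is_hom f -> is_hom g -> (forall y, S y -> f y = g y) -> f =1 g.
Proof.
move=> genS homf homg eqS y; apply: (genS y (fun y => f y = g y)) => // o a eqa.
by rewrite homf homg; congr interp; apply: functional_extensionality.
Qed.

Lemma hom_onto_gen A B (S : B -> Prop) (e : A -> B) :
  is_hom e -> generated_by S -> (forall y, S y -> exists x, e x = y) ->
  forall y, exists x, e x = y.
Proof.
move=> home genS ontoS y; apply: (genS y (fun y => exists x, e x = y)) => // o b onto_b.
pose pre k := proj1_sig (constructive_indefinite_description _ (onto_b k)).
exists (interp (o:=o) pre); rewrite home; congr interp.
apply: functional_extensionality => k.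
exact: proj2_sig (constructive_indefinite_description _ (onto_b k)).
Qed.

Lemma hom_factor_onto A B C (e : A -> B) (g : A -> C) :
  is_hom e -> is_hom g -> (forall y, exists x, e x = y) ->
  (forall x x', e x = e x' -> g x = g x') ->
  exists f : B -> C, is_hom f /\ forall x, f (e x) = g x.
Proof.
move=> home homg onto ker_eg.
pose c y := proj1_sig (constructive_indefinite_description _ (onto y)).
have cK y : e (c y) = y := proj2_sig (constructive_indefinite_description _ (onto y)).
exists (fun y => g (c y)); split=> [o b|x]; last by apply: ker_eg; rewrite cK.
have -> : interp (o:=o) b = e (interp (o:=o) (fun k => c (b k))).
  by rewrite home; congr interp; apply: functional_extensionality => k; rewrite cK.
by rewrite (ker_eg _ _ (cK _)) homg.
Qed.

Lemma gen_closure_inhabited A B (S : A -> Prop) x :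
  (forall y, S y -> inhabited B) -> gen_closure S x -> inhabited B.
Proof.
move=> SB Sx; apply: (Sx (fun _ => inhabited B)) => // o a inh_a.
case: (posnP (arity o)) => [o0 | o_gt0]; last exact: inh_a (Ordinal o_gt0).
by constructor; apply: (interp (o:=o)) => i; have := ltn_ord i; rewrite {2}o0.
Qed.

Definition sub_alg A (P : A -> Prop) (Pcl : Defs.closed P) : algebra sg :=
  @Algebra sg {x : A | P x}
    (fun o a => exist _ (interp (o:=o) (fun i => proj1_sig (a i)))
                  (Pcl o (fun i => proj1_sig (a i)) (fun i => proj2_sig (a i)))).

Lemma eval_sub_alg A (P : A -> Prop) (Pcl : Defs.closed P) (v : nat -> sub_alg Pcl) t :
  proj1_sig (eval v t) = eval (fun n => proj1_sig (v n)) t.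
Proof.
elim: t => [n|o args IH] //=.
by congr interp; apply: functional_extensionality => i; apply: IH.
Qed.

Lemma sub_alg_in_V V A (P : A -> Prop) (Pcl : Defs.closed P) :
  in_V V A -> in_V V (sub_alg Pcl).
Proof. by move=> AV t1 t2 Vt v; apply: proj1_sig_inj; rewrite !eval_sub_alg; apply: AV. Qed.

Lemma gen_sub_in_V V A n (g : 'I_n -> A) : in_V V A -> in_V V (gen_sub g).
Proof. exact: (@sub_alg_in_V V A _ (@gen_closure_closed sg A _)). Qed.

Definition sub_gen A n (g : 'I_n -> A) (i : 'I_n) : gen_sub g :=
  exist _ (g i) (gen_closure_base (ex_intro _ i erefl)).

Lemma gen_sub_generated A n (g : 'I_n -> A) :
  generated_by (fun y : gen_sub g => exists i, sub_gen g i = y).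
Proof.
pose S := fun y : gen_sub g => exists i, sub_gen g i = y.
case=> x gx.
(* Membership proofs are not canonical, so the induction quantifies over them. *)
suff : gen_closure (fun y => exists i, g i = y) x /\
       forall gx' : gen_closure _ x, gen_closure S (exist _ x gx') by case=> _; apply.
apply: (gx (fun x => gen_closure _ x /\ forall gx', gen_closure S (exist _ x gx'))).
- move=> _ [i <-]; split=> [|gx']; first exact: gen_closure_base (ex_intro _ i erefl).
  by apply: gen_closure_base; exists i; apply: proj1_sig_inj.
- move=> o a IHa; split=> [|gx']; first by apply: gen_closure_closed => i; case: (IHa i).
  pose a' i : gen_sub g := exist _ (a i) (proj1 (IHa i)).
  have -> : exist _ (interp (o:=o) a) gx' = interp (o:=o) a' by apply: proj1_sig_inj.
  by apply: gen_closure_closed => i; apply: (proj2 (IHa i)).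
Qed.

Lemma free_generated V X A (ins : X -> A) :
  is_free V ins -> generated_by (fun y => exists x, ins x = y).
Proof.
move=> [AV univ] y.
pose Sub := sub_alg (@gen_closure_closed sg A (fun y => exists x, ins x = y)).
have [g [homg g_ins _]] :=
  univ Sub (sub_alg_in_V AV) (fun x => exist _ (ins x) (gen_closure_base (ex_intro _ x erefl))).
have [g0 [_ _ uniq]] := univ A AV ins.
have gK : proj1_sig (g y) = y.
  rewrite (uniq (fun y => proj1_sig (g y))) => [|o a|x]; last by rewrite g_ins.
  - by rewrite -(uniq id).
  - by rewrite homg.
by rewrite -gK; apply: proj2_sig.
Qed.

Lemma free_projective V X A (ins : X -> A) : is_free V ins -> projective V A.
Proof. by move=> Afree; exists X, A, ins, id, id. Qed.

Lemma gen_sub_exact V A n (g : 'I_n -> A) : fg_free V A -> exact V (gen_sub g).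
Proof. by move=> Afree; exists A, n, g, id; split=> //; exists id. Qed.

Lemma one_gen_sub1 A (w : A) : one_gen (gen_sub (fun _ : 'I_1 => w)).
Proof.
exists (sub_gen (fun _ : 'I_1 => w) ord0) => y.
by apply: gen_closure_mono (gen_sub_generated y) => _ [i <-]; rewrite (ord1 i).
Qed.

End Subalgebras.

Section FiniteSupport.
Variables (sg : signature) (X : Type).

Lemma injective_cover n (xs : 'I_n -> X) :
  exists m (ys : 'I_m -> X), injective ys /\ forall i, exists j, ys j = xs i.
Proof.
elim: n xs => [|n IHn] xs.
  by exists 0, xs; split=> [[i i_lt0]|[i i_lt0]]; exfalso; rewrite ltn0 in i_lt0.
have [m [ys [ys_inj cover_ys]]] := IHn (fun i => xs (lift ord0 i)).
case: (classic (exists j, ys j = xs ord0)) => [[j0 ys_j0] | new_x0].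
  exists m, ys; split=> // i.
  by case: (unliftP ord0 i) => [i' ->|->]; [apply: cover_ys | exists j0].
pose zs (u : 'I_m + 'I_1) := if u is inl j then ys j else xs ord0.
have zs_inj : injective zs.
  case=> [a|a] [b|b] /= eab; first by rewrite (ys_inj _ _ eab).
  - by case: new_x0; exists a.
  - by case: new_x0; exists b.
  - by rewrite (ord1 a) (ord1 b).
exists (m + 1), (fun j => zs (split j)); split=> [a b /zs_inj /(can_inj splitK) //|i].
case: (unliftP ord0 i) => [i' ->|->].
- by have [j ys_j] := cover_ys i'; exists (lshift 1 j); rewrite (unsplitK (inl j)).
- by exists (rshift m ord0); rewrite (unsplitK (inr ord0)).
Qed.

Lemma gen_closure_finite (A : algebra sg) (ins : X -> A) y :
  gen_closure (fun w => exists x, ins x = w) y ->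
  exists n (xs : 'I_n -> X), gen_closure (fun w => exists i, ins (xs i) = w) y.
Proof.
move=> gy; apply: (gy (fun y => exists n (xs : 'I_n -> X), gen_closure _ y)).
  by move=> _ [x <-]; exists 1, (fun _ => x); apply: gen_closure_base; exists ord0.
move=> o a IHa.
suff [n [xs gxs]] : exists n (xs : 'I_n -> X), forall i : 'I_(arity o),
    gen_closure (fun w => exists i, ins (xs i) = w) (a i).
  by exists n, xs; apply: gen_closure_closed.
suff IHk : forall k, k <= arity o -> exists n (xs : 'I_n -> X), forall i : 'I_(arity o),
    i < k -> gen_closure (fun w => exists i, ins (xs i) = w) (a i).
  by have [n [xs gxs]] := IHk _ (leqnn _); exists n, xs => i; apply: gxs.
elim=> [|k IHk] k_le.
  have no_index : 'I_0 -> X by case=> i; rewrite ltn0.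
  by exists 0, no_index => i; rewrite ltn0.
have [n1 [xs1 gxs1]] := IHk (ltnW k_le).
have [n2 [xs2 gxs2]] := IHa (Ordinal k_le).
pose xs j := match split j with inl j1 => xs1 j1 | inr j2 => xs2 j2 end.
exists (n1 + n2), xs => i; rewrite ltnS leq_eqVlt => /orP[/eqP ik | i_lt_k].
- have -> : i = Ordinal k_le by apply: val_inj.
  apply: gen_closure_mono gxs2 => _ [j <-].
  by exists (rshift n1 j); rewrite /xs (unsplitK (inr j)).
- apply: gen_closure_mono (gxs1 _ i_lt_k) => _ [j <-].
  by exists (lshift n2 j); rewrite /xs (unsplitK (inl j)).
Qed.

Lemma gen_closure_finite_injective (A : algebra sg) (ins : X -> A) y :
  gen_closure (fun w => exists x, ins x = w) y ->
  exists n (xs : 'I_n -> X),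
    injective xs /\ gen_closure (fun w => exists i, ins (xs i) = w) y.
Proof.
move=> /gen_closure_finite[n [xs gy]].
have [m [ys [ys_inj cover_ys]]] := injective_cover xs.
exists m, ys; split=> //; apply: gen_closure_mono gy => _ [i <-].
by have [j <-] := cover_ys i; exists j.
Qed.

Lemma gen_sub_free V (A : algebra sg) (ins : X -> A) n (ys : 'I_n -> X) :
  is_free V ins -> injective ys -> is_free V (sub_gen (fun i => ins (ys i))).
Proof.
move=> [AV univ] ys_inj; split=> [|B BV f]; first exact: gen_sub_in_V.
(* Extending [f] along [ys] needs a default value in [B]; if [B] is empty,
   so is the subalgebra. *)
case: (classic (inhabited B)) => [[b0] | empty_B].
  pose f' x := if excluded_middle_informative (exists i, ys i = x) is left ex
               then f (proj1_sig (constructive_indefinite_description _ ex)) else b0.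
  have f'_ys i : f' (ys i) = f i.
    rewrite /f'; case: excluded_middle_informative => [ex|]; last by case; exists i.
    by case: (constructive_indefinite_description _ ex) => j /= /ys_inj ->.
  have [G [homG G_ins _]] := univ B BV f'.
  have homGsub : is_hom (fun y : gen_sub (fun i => ins (ys i)) => G (proj1_sig y)).
    by move=> o a /=; rewrite homG.
  exists (fun y => G (proj1_sig y)); split=> [//|i|g' homg' g'_gen].
    by rewrite /= G_ins f'_ys.
  apply: (hom_eq_gen (@gen_sub_generated _ _ _ _) homg' homGsub) => _ [i <-].
  by rewrite g'_gen /= G_ins f'_ys.
have no_elt (y : gen_sub (fun i => ins (ys i))) : False.
  apply: empty_B; apply: gen_closure_inhabited (proj2_sig y).
  by move=> _ [i _]; constructor; apply: f i.
exists (fun y => match no_elt y with end).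
by split=> [o a|i|g' _ _ y]; case: no_elt.
Qed.

End FiniteSupport.

Section OneGeneratedImages.
Variables (sg : signature) (V : variety sg).
Hypothesis V1ESP : oneESP V.

Lemma free1_image_retract (F : algebra sg) (z : F) X (FX : algebra sg) (ins : X -> FX)
    (q : F -> FX) :
  is_free V (fun _ : unit => z) -> is_free V ins -> is_hom q ->
  exists (S : algebra sg) (e : F -> S) (incl : S -> FX) (j : FX -> S),
    [/\ is_hom e, forall y, exists x, e x = y, is_hom j, cancel incl j &
        forall x, incl (e x) = q x].
Proof.
move=> Ffree FXfree homq.
have [n [ys [ys_inj gen_qz]]] :=
  gen_closure_finite_injective (free_generated FXfree (q z)).
pose S := gen_sub (fun _ : 'I_1 => exist _ (q z) gen_qz : gen_sub (fun i => ins (ys i))).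
have SV : in_V V S by do 2!apply: gen_sub_in_V; apply: FXfree.1.
have [_ S_retract] : strongly_projective V S.
  apply: V1ESP SV (one_gen_sub1 _) (gen_sub_exact _ _).
  by exists n, (sub_gen (fun i => ins (ys i))); apply: gen_sub_free.
pose incl (y : S) := proj1_sig (proj1_sig y).
have incl_inj : injective incl by move=> y y' /proj1_sig_inj /proj1_sig_inj.
have [j [homj inclK]] := S_retract FX incl (free_projective FXfree) (fun _ _ => erefl) incl_inj.
have [e [home e_z _]] := Ffree.2 S SV (fun _ => sub_gen _ ord0).
exists S, e, incl, j; split=> //.
  apply: hom_onto_gen home (@gen_sub_generated _ _ _ _) _ => _ [i <-].
  by exists z; rewrite (e_z tt) (ord1 i).
apply: (hom_eq_gen (f := fun x => incl (e x)) (free_generated Ffree) _ homq) => [o a|_ [[] <-]].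
  by rewrite /= home.
by rewrite /= e_z.
Qed.

Lemma hom_factor_projective (F : algebra sg) (z : F) (P1 P2 : algebra sg)
    (g1 : F -> P1) (g2 : F -> P2) :
  is_free V (fun _ : unit => z) -> is_hom g1 -> is_hom g2 -> projective V P2 ->
  (forall x y, g2 x = g2 y -> g1 x = g1 y) ->
  exists f : P2 -> P1, is_hom f /\ forall x, f (g2 x) = g1 x.
Proof.
move=> Ffree homg1 homg2 [X [FX [ins [r [s [FXfree _ homs sK]]]]]] ker21.
have homsg2 : is_hom (fun x => s (g2 x)) by move=> o a; rewrite homg2 homs.
have [S [e [incl [j [home e_onto homj inclK incl_e]]]]] :=
  free1_image_retract Ffree FXfree homsg2.
have ker_e x y : e x = e y -> g1 x = g1 y.
  by move=> exy; apply: ker21; apply: (can_inj sK); rewrite -!incl_e exy.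
have [f0 [homf0 f0_e]] := hom_factor_onto home homg1 e_onto ker_e.
exists (fun p => f0 (j (s p))); split=> [o a|x]; first by rewrite homs homj homf0.
by rewrite -incl_e inclK f0_e.
Qed.

Lemma sol_le_ker (F : algebra sg) (z : F) m (E : 'I_m -> algebra sg) (h : F -> prod_alg E)
    (g1 g2 : solution V h) :
  is_free V (fun _ : unit => z) ->
  sol_le g1 g2 <-> forall x y, sol_g g2 x = sol_g g2 y -> sol_g g1 x = sol_g g1 y.
Proof.
move=> Ffree; split=> [[f [_ f_g2]] x y g2xy | ker21]; first by rewrite -!f_g2 g2xy.
exact: hom_factor_projective Ffree (sol_hom g1) (sol_hom g2) (sol_proj g2) ker21.
Qed.

End OneGeneratedImages.

Section TypeTransfer.
Variables (S T : Type) (leS : S -> S -> Prop) (leT : T -> T -> Prop) (DT : T -> Prop).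
Variable k : S -> T.
Hypothesis le_k : forall a b, leS a b <-> leT (k a) (k b).
Hypothesis DT_k : forall s, DT (k s).
Hypothesis k_onto : forall t, DT t -> exists s, pequiv leT t (k s).
Hypothesis leT_trans : forall a b c, leT a b -> leT b c -> leT a c.
Hypothesis DT_pequiv : forall t t', DT t -> pequiv leT t t' -> DT t'.

Lemma pequivT_trans a b c : pequiv leT a b -> pequiv leT b c -> pequiv leT a c.
Proof. by move=> [ab ba] [bc cb]; split; apply: leT_trans; eauto. Qed.

Lemma pequivT_sym a b : pequiv leT a b -> pequiv leT b a.
Proof. by case. Qed.

Lemma pequiv_k a b : pequiv leS a b <-> pequiv leT (k a) (k b).
Proof. by rewrite /pequiv !le_k. Qed.

Lemma pequivT_refl s : pequiv leT (k s) (k s).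
Proof.
have [s' ss'] := k_onto (DT_k s).
exact: pequivT_trans ss' (pequivT_sym ss').
Qed.

Definition corresponding (MS : S -> Prop) (MT : T -> Prop) :=
  [/\ forall s, MS s <-> MT (k s), forall t, MT t -> DT t &
      forall t t', MT t -> pequiv leT t t' -> MT t'].

Lemma corresponding_min_complete MS MT : corresponding MS MT ->
  min_complete leS (fun _ => True) MS <-> min_complete leT DT MT.
Proof.
move=> [MST MT_DT MT_pequiv].
have MS_of t : MT t -> exists2 s, MS s & pequiv leT t (k s).
  by move=> MTt; have [s ts] := k_onto (MT_DT _ MTt); exists s => //; apply/MST/(MT_pequiv t).
split=> [[_ _ MS_antichain MS_cover] | [_ _ MT_antichain MT_cover]]; split=> //.
- by move=> t t' MTt _; apply: MT_pequiv.
- move=> t1 t2 /MS_of[s1 MSs1 ts1] /MS_of[s2 MSs2 ts2] t12.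
  have /pequiv_k s12 : pequiv leS s1 s2.
    apply: MS_antichain => //; apply/le_k.
    by apply: leT_trans (proj2 ts1) _; apply: leT_trans t12 (proj1 ts2).
  exact: pequivT_trans ts1 (pequivT_trans s12 (pequivT_sym ts2)).
- move=> t /k_onto[s ts]; have [m MSm ms] := MS_cover s I.
  by exists (k m); [apply/MST | apply: leT_trans (proj2 ts); apply/le_k].
- move=> s s' /MST MTs _ /pequiv_k ss'; exact/MST/(MT_pequiv _ _ MTs).
- by move=> s s' /MST MTs /MST MTs' /le_k ss'; apply/pequiv_k/MT_antichain.
- move=> s _; have [t MTt ts] := MT_cover _ (DT_k s).
  have [s' MSs' ts'] := MS_of t MTt.
  by exists s' => //; apply/le_k; apply: leT_trans (proj2 ts') ts.
Qed.

Lemma corresponding_nclasses MS MT n : corresponding MS MT ->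
  nclasses leS MS n <-> nclasses leT MT n.
Proof.
move=> [MST MT_DT MT_pequiv]; split=> [[r [MSr r_inj r_cover]] | [r [MTr r_inj r_cover]]].
  exists (fun i => k (r i)); split=> [i|i j /pequiv_k /r_inj //|t MTt]; first exact/MST.
  have [s ts] := k_onto (MT_DT _ MTt).
  have [i /pequiv_k si] := r_cover s (proj2 (MST s) (MT_pequiv _ _ MTt ts)).
  by exists i; apply: pequivT_trans ts si.
pose r' i := proj1_sig (constructive_indefinite_description _ (k_onto (MT_DT _ (MTr i)))).
have r_r' i : pequiv leT (r i) (k (r' i)) :=
  proj2_sig (constructive_indefinite_description _ (k_onto (MT_DT _ (MTr i)))).
exists r'; split=> [i|i j /pequiv_k r'ij|s /MST MTs].
- exact/MST/(MT_pequiv _ _ (MTr i) (r_r' i)).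
- by apply: r_inj; apply: pequivT_trans (r_r' i) (pequivT_trans r'ij (pequivT_sym (r_r' j))).
- have [i si] := r_cover _ MTs; exists i; apply/pequiv_k.
  exact: pequivT_trans si (r_r' i).
Qed.

Lemma corresponding_image MS : min_complete leS (fun _ => True) MS ->
  corresponding MS (fun t => DT t /\ exists s, MS s /\ pequiv leT t (k s)).
Proof.
move=> [_ MS_pequiv _ _]; split=> [s|t []//|t t' [DTt [s [MSs ts]]] tt'].
- split=> [MSs|[_ [s' [MSs' ss']]]]; first by split=> //; exists s; split=> //; apply: pequivT_refl.
  by apply: MS_pequiv MSs' I _; apply/pequiv_k/pequivT_sym.
- split; first exact: DT_pequiv tt'.
  by exists s; split=> //; apply: pequivT_trans (pequivT_sym tt') ts.
Qed.

Lemma corresponding_preimage MT : min_complete leT DT MT -> corresponding (fun s => MT (k s)) MT.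
Proof.
move=> [MT_DT MT_pequiv _ _]; split=> // t t' MTt tt'.
exact: MT_pequiv MTt (DT_pequiv (MT_DT _ MTt) tt') tt'.
Qed.

Lemma min_complete_transfer (Phi : (nat -> Prop) -> Prop) :
  (forall N N', (forall n, N n <-> N' n) -> Phi N -> Phi N') ->
  (exists MS, min_complete leS (fun _ => True) MS /\ Phi (nclasses leS MS)) <->
  (exists MT, min_complete leT DT MT /\ Phi (nclasses leT MT)).
Proof.
move=> Phi_ext; split=> [[M [Mmin PhiM]] | [M [Mmin PhiM]]].
  have MM' := corresponding_image Mmin.
  eexists; split; first exact/(corresponding_min_complete MM').
  by apply: Phi_ext PhiM => n; apply: corresponding_nclasses.
have MM' := corresponding_preimage Mmin.
exists (fun s => M (k s)); split; first exact/(corresponding_min_complete MM').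
by apply: Phi_ext PhiM => n; apply: iff_sym; apply: corresponding_nclasses.
Qed.

Lemma has_type_transfer t : has_type leS (fun _ => True) t <-> has_type leT DT t.
Proof.
case: t => /=.
- by apply: (min_complete_transfer (Phi := fun N => N 1)) => N N' /(_ 1) [].
- apply: (min_complete_transfer (Phi := fun N => exists n, 1 < n /\ N n)).
  by move=> N N' NN' [n [n_gt1 /NN' Nn]]; exists n.
- apply: (min_complete_transfer (Phi := fun N => forall n, ~ N n)).
  by move=> N N' NN' notN n /NN'; apply: notN.
- have [to_T to_S] := min_complete_transfer (Phi := fun _ => True) (fun _ _ _ _ => I).
  split=> [noS [M Mmin] | noT [M Mmin]].
    by have [M' [M'min _]] := to_S (ex_intro _ M (conj Mmin I)); apply: noS; exists M'.
  by have [M' [M'min _]] := to_T (ex_intro _ M (conj Mmin I)); apply: noT; exists M'.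
Qed.

End TypeTransfer.

Theorem corollary4p20 (sg : signature) (V : variety sg) (F : algebra sg) (z : F)
  (m : nat) (E : 'I_m -> algebra sg) (h : F -> prod_alg E) :
  oneESP V -> egen_problem V z h ->
  forall t : gen_type, egen_type_of V h t <-> G_type_of V h t.
Proof.
move=> V1ESP [Ffree _ _ _] t.
apply: (has_type_transfer (k := fun g x y => sol_g g x = sol_g g y)).
- move=> g1 g2; exact (sol_le_ker V1ESP g1 g2 Ffree).
- by move=> g; exists g.
- by move=> R [g gR]; exists g; split=> x y; rewrite gR.
- by move=> R1 R2 R3 R21 R32 x y /R32 /R21.
- move=> R R' [g gR] [R'R RR']; exists g => x y.
  by split=> [/R'R /gR | /gR /RR'].
Qed.
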